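(* Let $G$ be a finitely generated group hyperbolic relative to a finite collection $\mathcal P=\{P_\lambda\}_{\lambda\in\Lambda}$, $S$ a finite generating set, and $n\ge1$. Then the $G$-stabiliser of the barycentre of any simplex of the $n$-Rips complex $\Gamma_n^\blacktriangle$ that is not a vertex is finite.
   Context: Let $\Gamma$ be the Cayley graph of $G$ with respect to $S$, $V=G$, $W$ the set of cosets $gP_\lambda$. Relative hyperbolicity means the coned-off Cayley graph (vertex set $V\cup W$, edges of $\Gamma$ plus an edge $(v,w)$ whenever $v\in w$) is fine and $\delta$-hyperbolic. Extend $|\cdot,\cdot|_S$ to $V\cup W$ via distances in $\Gamma$ between the corresponding elements/cosets. $\Gamma_n$ has vertex set $V\cup W$ and an edge between $u\ne u'$ whenever $|u,u'|_S\le n$; $\Gamma_n^\blacktriangle$ is obtained by spanning simplices on all cliques of $\Gamma_n$, with $G$ acting by left multiplication. *)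

From Stdlib Require Import Reals List Lia ZArith ClassicalEpsilon.
Import ListNotations.

Record Group := {
  gcar :> Type;
  gmul : gcar -> gcar -> gcar;
  ginv : gcar -> gcar;
  gone : gcar;
  gmulA : forall x y z, gmul x (gmul y z) = gmul (gmul x y) z;
  gmul1g : forall x, gmul gone x = x;
  gmulVg : forall x, gmul (ginv x) x = gone }.

Arguments gmul {G} : rename.
Arguments ginv {G} : rename.
Arguments gone {G} : rename.

Section Graphs.
Context {V : Type} (valid : V -> Prop) (adj : V -> V -> Prop).

Fixpoint chain (l : list V) : Prop :=
  match l with
  | x :: ((y :: _) as t) => adj x y /\ chain t
  | _ => True
  end.

Definition path_len (x y : V) (k : nat) : Prop :=
  exists l : list V, length l = S k /\ hd x l = x /\ last l x = y /\
    Forall valid l /\ chain l.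

Definition graph_connected : Prop :=
  forall x y, valid x -> valid y -> exists k, path_len x y k.

Definition graph_dist (x y : V) (k : nat) : Prop :=
  path_len x y k /\ forall k', path_len x y k' -> k <= k'.

(* delta-hyperbolicity via the Gromov four-point condition on the vertex set,
   written with doubled Gromov products:
   2 (x|y)_w = d(x,w) + d(y,w) - d(x,y). *)
Definition graph_hyperbolic : Prop :=
  graph_connected /\
  exists delta : nat, forall x y z w dxy dxz dyz dxw dyw dzw,
    valid x -> valid y -> valid z -> valid w ->
    graph_dist x y dxy -> graph_dist x z dxz -> graph_dist y z dyz ->
    graph_dist x w dxw -> graph_dist y w dyw -> graph_dist z w dzw ->
    (Z.of_nat dxw + Z.of_nat dyw - Z.of_nat dxy >=
       Z.min (Z.of_nat dxw + Z.of_nat dzw - Z.of_nat dxz)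
             (Z.of_nat dyw + Z.of_nat dzw - Z.of_nat dyz) - 2 * Z.of_nat delta)%Z.

Definition circuit (c : list V) : Prop :=
  3 <= length c /\ NoDup c /\ Forall valid c /\
  exists v0 c', c = v0 :: c' /\ chain (c ++ [v0]).

Definition circuit_has_edge (c : list V) (a b : V) : Prop :=
  exists v0 c', c = v0 :: c' /\
  exists l1 l2, c ++ [v0] = l1 ++ a :: b :: l2 \/ c ++ [v0] = l1 ++ b :: a :: l2.

Definition graph_fine : Prop :=
  forall a b, valid a -> valid b -> adj a b -> forall k,
    exists L : list (list V), forall c,
      circuit c -> length c = k -> circuit_has_edge c a b -> In c L.
End Graphs.

Section RelHyp.
Context (G : Group) (Lam : Type) (P : Lam -> G -> Prop) (S : list G).

Definition is_subgroup (H : G -> Prop) : Prop :=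
  H gone /\ (forall x y, H x -> H y -> H (gmul x y)) /\ (forall x, H x -> H (ginv x)).

Definition letter (a : G) : Prop := In a S \/ exists s, In s S /\ a = ginv s.

Definition word_eval (w : list G) : G := fold_right gmul gone w.

Definition generates : Prop :=
  forall g : G, exists w, Forall letter w /\ g = word_eval w.

Definition wdist_le (a b : G) (k : nat) : Prop :=
  exists w, Forall letter w /\ length w <= k /\ gmul a (word_eval w) = b.

(* vertices of V ∪ W: group elements, and left cosets g P_lambda tagged by lambda *)
Inductive vtx : Type :=
| VG : G -> vtx
| VW : Lam -> (G -> Prop) -> vtx.

Definition lcoset (g : G) (l : Lam) : G -> Prop :=
  fun x => exists p, P l p /\ x = gmul g p.

Definition valid_vtx (v : vtx) : Prop :=
  match v with
  | VG _ => True
  | VW l C => exists g, C = lcoset g l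
  end.

Definition vset (v : vtx) : G -> Prop :=
  match v with
  | VG g => fun x => x = g
  | VW _ C => C
  end.

Definition cone_adj (u v : vtx) : Prop :=
  match u, v with
  | VG a, VG b => a <> b /\ exists s, In s S /\ (b = gmul a s \/ a = gmul b s)
  | VG a, VW _ C => C a
  | VW _ C, VG a => C a
  | _, _ => False
  end.

Definition rel_hyperbolic : Prop :=
  (forall l, is_subgroup (P l)) /\
  graph_fine valid_vtx cone_adj /\ graph_hyperbolic valid_vtx cone_adj.

Definition rips_adj (n : nat) (u v : vtx) : Prop :=
  u <> v /\ exists a b, vset u a /\ vset v b /\ wdist_le a b n.

Definition rips_simplex (n : nat) (sigma : list vtx) : Prop :=
  sigma <> [] /\ NoDup sigma /\ Forall valid_vtx sigma /\
  forall u v, In u sigma -> In v sigma -> u <> v -> rips_adj n u v.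

Definition act (g : G) (v : vtx) : vtx :=
  match v with
  | VG h => VG (gmul g h)
  | VW l C => VW l (fun x => C (gmul (ginv g) x))
  end.

(* points of the geometric realisation as barycentric-coordinate functions *)
Definition barycentre (sigma : list vtx) : vtx -> R :=
  fun v => if excluded_middle_informative (In v sigma)
           then (/ INR (length sigma))%R else 0%R.

Definition act_pt (g : G) (x : vtx -> R) : vtx -> R :=
  fun v => x (act (ginv g) v).

Definition stabiliser (x : vtx -> R) : G -> Prop :=
  fun g => forall v, act_pt g x v = x v.
End RelHyp.

Definition finite_set {T : Type} (A : T -> Prop) : Prop :=
  exists L : list T, forall t, A t -> In t L.

(* The stabiliser of the barycentre permutes the vertices of sigma, so it is covered by
   finitely many translates of the pointwise stabiliser of two distinct vertices u1, u2.
   If one of them is a group element that stabiliser is trivial.  If both are cosets,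
   join them by a shortest Cayley path gamma.  For h <> 1 fixing both cosets, gamma and
   h gamma share no vertex (a common vertex would give a shorter path), so
   u1, gamma, u2, reversed h gamma is a circuit of the coned-off graph of length
   2|gamma| + 2 through the edge from u1 to the start of gamma.  Fineness leaves finitely
   many such circuits, and h is read off from its circuit.  Neither hyperbolicity nor the
   value of n is needed. *)

From Stdlib Require Import Reals List Lia Wf_nat Permutation FinFun
  FunctionalExtensionality Classical ClassicalEpsilon.
Import ListNotations.

Section GroupFacts.
Context {G : Group}.
Implicit Types x y z : G.

Lemma gmulgV x : gmul x (ginv x) = gone.
Proof.
  rewrite <- (gmul1g G (gmul x (ginv x))), <- (gmulVg G (ginv x)) at 1.
  rewrite <- gmulA, (gmulA _ (ginv x) x), gmulVg, gmul1g.
  apply gmulVg.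
Qed.

Lemma gmulg1 x : gmul x gone = x.
Proof. rewrite <- (gmulVg G x), gmulA, gmulgV, gmul1g. reflexivity. Qed.

Lemma gmulKg x y : gmul (ginv x) (gmul x y) = y.
Proof. rewrite gmulA, gmulVg, gmul1g. reflexivity. Qed.

Lemma gmulKVg x y : gmul x (gmul (ginv x) y) = y.
Proof. rewrite gmulA, gmulgV, gmul1g. reflexivity. Qed.

Lemma gmulI x y z : gmul x y = gmul x z -> y = z.
Proof. intro E. rewrite <- (gmulKg x y), E, gmulKg. reflexivity. Qed.

Lemma ginv_uniq x y : gmul x y = gone -> x = ginv y.
Proof. intro E. rewrite <- (gmulg1 x), <- (gmulgV y), gmulA, E, gmul1g. reflexivity. Qed.

Lemma ginvM x y : ginv (gmul x y) = gmul (ginv y) (ginv x).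
Proof.
  symmetry; apply ginv_uniq.
  rewrite <- gmulA, gmulKg. apply gmulVg.
Qed.

Lemma ginv1 : ginv (@gone G) = gone.
Proof. symmetry; apply ginv_uniq, gmul1g. Qed.

Lemma gmul_fix_eq1 x y : gmul x y = y -> x = gone.
Proof. intro E. rewrite <- (gmulg1 x), <- (gmulgV y), gmulA, E. reflexivity. Qed.

Lemma word_eval_cat (u v : list G) :
  word_eval G (u ++ v) = gmul (word_eval G u) (word_eval G v).
Proof.
  induction u as [|s u IH]; cbn.
  - symmetry; apply gmul1g.
  - unfold word_eval in IH. rewrite IH, gmulA. reflexivity.
Qed.

End GroupFacts.

Section Action.
Context {G : Group} {Lam : Type}.
Implicit Types (g h : G) (u v : vtx G Lam).

Lemma act_mul g h u : act G Lam (gmul g h) u = act G Lam g (act G Lam h u).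
Proof.
  destruct u as [k|l C]; cbn; [rewrite gmulA; reflexivity|].
  f_equal. apply functional_extensionality; intro x. rewrite ginvM, gmulA. reflexivity.
Qed.

Lemma act1 u : act G Lam gone u = u.
Proof.
  destruct u as [k|l C]; cbn; [rewrite gmul1g; reflexivity|].
  f_equal. apply functional_extensionality; intro x. rewrite ginv1, gmul1g. reflexivity.
Qed.

Lemma actK g u : act G Lam (ginv g) (act G Lam g u) = u.
Proof. rewrite <- act_mul, gmulVg. apply act1. Qed.

Lemma act_VW_fixed g l (C : G -> Prop) :
  act G Lam g (VW G Lam l C) = VW G Lam l C -> forall y, C (gmul g y) <-> C y.
Proof.
  intros E y. injection E as E.
  rewrite <- (equal_f E (gmul g y)), gmulKg. reflexivity.
Qed.

Lemma act_VG_fixed g k : act G Lam g (VG G Lam k) = VG G Lam k -> g = gone.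
Proof. intro E. injection E as E. exact (gmul_fix_eq1 _ _ E). Qed.

Variable S : list G.

Lemma cone_adj_sym u v : cone_adj G Lam S u v -> cone_adj G Lam S v u.
Proof.
  destruct u as [a|l C], v as [b|l' C']; cbn; auto.
  intros [Hab [s [Hs E]]]. split; [congruence|]. exists s. tauto.
Qed.

Lemma cone_adj_act g u v :
  cone_adj G Lam S u v -> cone_adj G Lam S (act G Lam g u) (act G Lam g v).
Proof.
  destruct u as [a|l C], v as [b|l' C']; cbn; try rewrite gmulKg; auto.
  intros [Hab [s [Hs E]]]. split.
  - intro E'. apply Hab, (gmulI _ _ _ E').
  - exists s. split; [exact Hs|]. destruct E as [->| ->]; rewrite gmulA; tauto.
Qed.

End Action.

Section Chains.
Context {V : Type} {adj : V -> V -> Prop}.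

Lemma chain_cat l1 x l2 :
  chain adj (l1 ++ [x]) -> chain adj (x :: l2) -> chain adj (l1 ++ x :: l2).
Proof.
  induction l1 as [|y [|z l1] IH]; cbn; auto.
  - tauto.
  - intros [Hyz Hl1] Hl2. split; [exact Hyz | exact (IH Hl1 Hl2)].
Qed.

Lemma chain_map (f : V -> V) l :
  (forall u v, adj u v -> adj (f u) (f v)) -> chain adj l -> chain adj (map f l).
Proof.
  intro Hf. induction l as [|x [|y l] IH]; cbn; auto.
  intros [Hxy Hl]. split; [exact (Hf _ _ Hxy) | exact (IH Hl)].
Qed.

Hypothesis adj_sym : forall u v, adj u v -> adj v u.

Lemma chain_rev l : chain adj l -> chain adj (rev l).
Proof.
  induction l as [|x [|y l] IH]; cbn; auto.
  intros [Hxy Hl]. specialize (IH Hl). cbn in IH.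
  rewrite <- app_assoc. apply chain_cat; [exact IH|]. cbn; auto.
Qed.

Lemma chain_map_seq (f : nat -> V) start len :
  (forall i, start <= i < start + len -> adj (f i) (f (S i))) ->
  chain adj (map f (seq start (S len))).
Proof.
  revert start; induction len as [|len IH]; intros start Hf; cbn; auto.
  split; [apply Hf; lia|].
  apply (IH (S start)). intros i Hi; apply Hf; lia.
Qed.

Context {valid : V -> Prop}.

Lemma circuit_of_paths c1 c2 p q :
  NoDup (c1 :: c2 :: p ++ q) -> Forall valid (c1 :: c2 :: p ++ q) ->
  1 <= length (p ++ q) ->
  chain adj (c1 :: p ++ [c2]) -> chain adj (c1 :: q ++ [c2]) ->
  circuit valid adj (c1 :: p ++ c2 :: rev q).
Proof.
  intros Hnd Hval Hlen Hp Hq.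
  assert (Hperm : Permutation (c1 :: c2 :: p ++ q) (c1 :: p ++ c2 :: rev q)).
  { apply perm_skip. rewrite Permutation_middle.
    apply Permutation_app_head, perm_skip, Permutation_rev. }
  split; [|split; [|split]].
  - rewrite length_app in Hlen. cbn. rewrite length_app. cbn. rewrite length_rev. lia.
  - exact (Permutation_NoDup Hperm Hnd).
  - exact (Permutation_Forall Hperm Hval).
  - exists c1, (p ++ c2 :: rev q). split; [reflexivity|].
    replace ((c1 :: p ++ c2 :: rev q) ++ [c1]) with ((c1 :: p) ++ c2 :: (rev q ++ [c1]))
      by (cbn; rewrite <- app_assoc; reflexivity).
    apply chain_cat; [exact Hp|].
    apply chain_rev in Hq. cbn in Hq. rewrite rev_app_distr in Hq. exact Hq.
Qed.

End Chains.

Lemma firstn_succ_nth {A : Type} (l : list A) k d :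
  k < length l -> firstn (S k) l = firstn k l ++ [nth k l d].
Proof.
  revert k; induction l as [|x l IH]; intros k Hk; cbn in *; [lia|].
  destruct k; cbn; [reflexivity|]. rewrite (IH k) by lia. reflexivity.
Qed.

Lemma Forall_firstn_cat_skipn {A : Type} (P : A -> Prop) (l : list A) i j :
  Forall P l -> Forall P (firstn i l ++ skipn j l).
Proof.
  intro Hl. apply Forall_app. split.
  - rewrite <- (firstn_skipn i l), Forall_app in Hl. tauto.
  - rewrite <- (firstn_skipn j l), Forall_app in Hl. tauto.
Qed.

Lemma finite_set_retract {A B : Type} (X : A -> Prop) (Y : B -> Prop)
  (f : A -> B) (r : B -> A) :
  (forall t, X t -> Y (f t)) -> (forall t, X t -> r (f t) = t) ->
  finite_set Y -> finite_set X.
Proof.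
  intros HXY Hr [L HL]. exists (map r L). intros t Ht.
  rewrite <- (Hr t Ht). apply in_map, HL, HXY, Ht.
Qed.

Lemma finite_set_union {I T : Type} (l : list I) (X : I -> T -> Prop) :
  (forall i, In i l -> finite_set (X i)) ->
  finite_set (fun t => exists i, In i l /\ X i t).
Proof.
  induction l as [|i l IH]; intro Hfin.
  - exists []. intros t [i [[] _]].
  - destruct (Hfin i (or_introl eq_refl)) as [L1 H1].
    destruct IH as [L2 H2]; [intros j Hj; apply Hfin; right; exact Hj|].
    exists (L1 ++ L2). intros t [j [[<-|Hj] Ht]]; apply in_or_app.
    + left; exact (H1 t Ht).
    + right; apply H2; exists j; auto.
Qed.

Section Geodesic.
Context {G : Group} {Lam : Type} (P : Lam -> G -> Prop) (Sg : list G).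
Context (l1 l2 : Lam) (C1 C2 : G -> Prop).
Context (a b : G) (w : list G).
Hypotheses (Ha : C1 a) (Hb : C2 b) (Hw : Forall (letter G Sg) w)
  (Hab : gmul a (word_eval G w) = b).
Hypothesis Hmin : forall a' b' w', C1 a' -> C2 b' -> Forall (letter G Sg) w' ->
  gmul a' (word_eval G w') = b' -> length w <= length w'.

Definition geo_point (i : nat) : G := gmul a (word_eval G (firstn i w)).

Lemma geo_point0 : geo_point 0 = a.
Proof. apply gmulg1. Qed.

Lemma geo_point_rest i : gmul (geo_point i) (word_eval G (skipn i w)) = b.
Proof. unfold geo_point. rewrite <- gmulA, <- word_eval_cat, firstn_skipn. exact Hab. Qed.

Lemma geo_point_end : geo_point (length w) = b.
Proof. rewrite <- (geo_point_rest (length w)), skipn_all. symmetry; apply gmulg1. Qed.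

Lemma geo_point_S k : k < length w -> geo_point (S k) = gmul (geo_point k) (nth k w gone).
Proof.
  intro Hk. unfold geo_point.
  rewrite (firstn_succ_nth w k gone Hk), word_eval_cat, gmulA.
  f_equal. apply gmulg1.
Qed.

Lemma geo_no_shortcut i j a' : i < j <= length w -> C1 a' ->
  gmul a' (word_eval G (firstn i w)) <> geo_point j.
Proof.
  intros Hij Ha' E.
  assert (Hlen := Hmin a' b (firstn i w ++ skipn j w) Ha' Hb
                   (Forall_firstn_cat_skipn _ w i j Hw)).
  rewrite length_app, firstn_length_le, length_skipn in Hlen by lia.
  enough (length w <= i + (length w - j)) by lia.
  apply Hlen. rewrite word_eval_cat, gmulA, E. apply geo_point_rest.
Qed.

Lemma geo_point_inj i j : i <= length w -> j <= length w -> geo_point i = geo_point j -> i = j.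
Proof.
  intros Hi Hj E. destruct (Nat.lt_trichotomy i j) as [Hlt|[Heq|Hgt]]; [exfalso..|exact Heq|exfalso].
  - exact (geo_no_shortcut i j a ltac:(lia) Ha E).
  - exact (geo_no_shortcut j i a ltac:(lia) Ha (eq_sym E)).
Qed.

(* A coincidence [geo_point i = h * geo_point j] would let a translate of an initial segment shortcut
   the geodesic. *)
Lemma geo_point_translate h i j : h <> gone -> (forall y, C1 (gmul h y) <-> C1 y) ->
  i <= length w -> j <= length w -> geo_point i <> gmul h (geo_point j).
Proof.
  intros Hh Hfix Hi Hj E. destruct (Nat.lt_trichotomy i j) as [Hlt|[<-|Hgt]].
  - apply (geo_no_shortcut i j (gmul (ginv h) a)); [lia| |].
    + apply Hfix. rewrite gmulKVg. exact Ha.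
    + rewrite <- gmulA. fold (geo_point i). rewrite E. apply gmulKg.
  - exact (Hh (gmul_fix_eq1 _ _ (eq_sym E))).
  - apply (geo_no_shortcut j i (gmul h a)); [lia|apply Hfix, Ha|].
    rewrite <- gmulA. fold (geo_point j). symmetry; exact E.
Qed.

Lemma geo_point_adj k : k < length w ->
  cone_adj G Lam Sg (VG G Lam (geo_point k)) (VG G Lam (geo_point (S k))).
Proof.
  intro Hk.
  assert (Hne : geo_point k <> geo_point (S k)) by (intro E; apply geo_point_inj in E; lia).
  assert (Hs : letter G Sg (nth k w gone)) by (rewrite Forall_forall in Hw; apply Hw, nth_In, Hk).
  rewrite (geo_point_S k Hk) in *. split; [exact Hne|].
  destruct Hs as [Hs|[t [Ht ->]]].
  - exists (nth k w gone). auto.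
  - exists t. split; [exact Ht|]. right. rewrite <- gmulA, gmulVg, gmulg1. reflexivity.
Qed.

Definition geo_points : list G := map geo_point (seq 0 (S (length w))).

Lemma geo_points_NoDup : NoDup geo_points.
Proof.
  apply NoDup_map_NoDup_ForallPairs; [|apply seq_NoDup].
  intros i j Hi Hj. apply in_seq in Hi, Hj. apply geo_point_inj; lia.
Qed.

Lemma geo_points_translate_disjoint h : h <> gone -> (forall y, C1 (gmul h y) <-> C1 y) ->
  forall x, In x geo_points -> ~ In x (map (gmul h) geo_points).
Proof.
  intros Hh Hfix x Hx Hx'.
  apply in_map_iff in Hx as [i [<- Hi]].
  apply in_map_iff in Hx' as [y [E Hy]]. apply in_map_iff in Hy as [j [<- Hj]].
  apply in_seq in Hi, Hj. exact (geo_point_translate h i j Hh Hfix ltac:(lia) ltac:(lia) (eq_sym E)).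
Qed.

Local Notation c1 := (VW G Lam l1 C1).
Local Notation c2 := (VW G Lam l2 C2).

Definition geo_path : list (vtx G Lam) := map (VG G Lam) geo_points.

Lemma geo_path_chain : chain (cone_adj G Lam Sg) (c1 :: geo_path ++ [c2]).
Proof.
  unfold geo_path, geo_points. rewrite map_map.
  set (f := fun i => VG G Lam (geo_point i)).
  assert (Hpath : chain (cone_adj G Lam Sg) (c1 :: map f (seq 0 (S (length w))))).
  { cbn. split; [rewrite geo_point0; exact Ha|].
    change (chain (cone_adj G Lam Sg) (map f (seq 0 (S (length w))))).
    apply chain_map_seq. intros i Hi. apply geo_point_adj. lia. }
  rewrite seq_S, map_app in *. cbn [map] in *. rewrite <- app_assoc.
  change (chain (cone_adj G Lam Sg) ((c1 :: map f (seq 0 (length w))) ++ f (0 + length w) :: [c2])).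
  apply chain_cat; [exact Hpath|]. cbn. rewrite geo_point_end. auto.
Qed.

Definition geo_circuit (h : G) : list (vtx G Lam) :=
  c1 :: geo_path ++ c2 :: rev (map (act G Lam h) geo_path).

Lemma geo_circuit_is_circuit h :
  valid_vtx G Lam P c1 -> valid_vtx G Lam P c2 -> c1 <> c2 -> h <> gone ->
  act G Lam h c1 = c1 -> act G Lam h c2 = c2 ->
  circuit (valid_vtx G Lam P) (cone_adj G Lam Sg) (geo_circuit h).
Proof.
  intros Hv1 Hv2 Hne Hh Hfix1 Hfix2.
  assert (HC1 := act_VW_fixed h l1 C1 Hfix1).
  assert (Hpq : geo_path ++ map (act G Lam h) geo_path
                = map (VG G Lam) (geo_points ++ map (gmul h) geo_points)).
  { unfold geo_path. rewrite map_app, !map_map. reflexivity. }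
  apply (circuit_of_paths (cone_adj_sym Sg) c1 c2 geo_path (map (act G Lam h) geo_path)).
  - rewrite Hpq. constructor; [|constructor].
    + intros [E|Hin]; [congruence|]. apply in_map_iff in Hin as [x [E _]]. discriminate.
    + intro Hin. apply in_map_iff in Hin as [x [E _]]. discriminate.
    + apply Injective_map_NoDup; [intros x y E; injection E; auto|].
      apply NoDup_app; [apply geo_points_NoDup| |apply geo_points_translate_disjoint; auto].
      apply Injective_map_NoDup; [exact (gmulI h)|apply geo_points_NoDup].
  - rewrite Hpq. constructor; [exact Hv1|constructor; [exact Hv2|]].
    apply Forall_forall. intros v Hv. apply in_map_iff in Hv as [x [<- _]]. exact I.
  - rewrite Hpq, length_map, length_app. unfold geo_points. rewrite length_map, length_seq. lia.
  - apply geo_path_chain.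
  - replace (c1 :: map (act G Lam h) geo_path ++ [c2])
      with (map (act G Lam h) (c1 :: geo_path ++ [c2]))
      by (rewrite map_cons, map_app, Hfix1; cbn [map]; rewrite Hfix2; reflexivity).
    apply chain_map; [apply cone_adj_act|apply geo_path_chain].
Qed.

Lemma geo_circuit_length h : length (geo_circuit h) = 2 * length w + 4.
Proof.
  unfold geo_circuit, geo_path, geo_points.
  cbn [length]. rewrite length_app. cbn [length]. rewrite length_rev, !length_map, length_seq. lia.
Qed.

Lemma geo_circuit_edge h : circuit_has_edge (geo_circuit h) c1 (VG G Lam a).
Proof.
  exists c1, (geo_path ++ c2 :: rev (map (act G Lam h) geo_path)). split; [reflexivity|].
  unfold geo_circuit, geo_path, geo_points.
  change (seq 0 (S (length w))) with (0 :: seq 1 (length w)).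
  cbn [map app]. rewrite geo_point0. eexists [], _. left. reflexivity.
Qed.

Lemma geo_circuit_last h : last (geo_circuit h) (VG G Lam gone) = VG G Lam (gmul h a).
Proof.
  unfold geo_circuit, geo_path, geo_points. change (seq 0 (S (length w))) with (0 :: seq 1 (length w)).
  cbn [map rev]. rewrite geo_point0.
  rewrite (app_comm_cons _ _ (VW G Lam l2 C2)), app_assoc, app_comm_cons. apply last_last.
Qed.

(* [h] is recovered from the last vertex [h a] of its circuit. *)
Lemma geo_pair_stabiliser_finite :
  graph_fine (valid_vtx G Lam P) (cone_adj G Lam Sg) ->
  valid_vtx G Lam P c1 -> valid_vtx G Lam P c2 -> c1 <> c2 ->
  finite_set (fun h => act G Lam h c1 = c1 /\ act G Lam h c2 = c2).
Proof.
  intros Hfine Hv1 Hv2 Hne.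
  destruct (Hfine c1 (VG G Lam a) Hv1 I Ha (2 * length w + 4)) as [L HL].
  set (extract := fun c => match last c (VG G Lam gone) with
                           | VG _ _ y => gmul y (ginv a) | _ => gone end).
  destruct (finite_set_retract
              (fun h => (act G Lam h c1 = c1 /\ act G Lam h c2 = c2) /\ h <> gone)
              (fun c => In c L) geo_circuit extract) as [L' HL'].
  - intros h [[Hfix1 Hfix2] Hh]. apply HL.
    + apply geo_circuit_is_circuit; auto.
    + apply geo_circuit_length.
    + apply geo_circuit_edge.
  - intros h _. unfold extract. rewrite geo_circuit_last, <- gmulA, gmulgV. apply gmulg1.
  - exists L. auto.
  - exists (gone :: L'). intros h Hh.
    destruct (classic (h = gone)) as [->|Hh']; [left; reflexivity|right; apply HL'; auto].
Qed.

End Geodesic.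

Section Stabilisers.
Context {G : Group} {Lam : Type} (P : Lam -> G -> Prop) (Sg : list G).

Lemma exists_shortest_word (C1 C2 : G -> Prop) a0 b0 :
  generates G Sg -> C1 a0 -> C2 b0 ->
  exists a b w, C1 a /\ C2 b /\ Forall (letter G Sg) w /\ gmul a (word_eval G w) = b /\
    forall a' b' w', C1 a' -> C2 b' -> Forall (letter G Sg) w' ->
      gmul a' (word_eval G w') = b' -> length w <= length w'.
Proof.
  intros Hgen Ha0 Hb0.
  set (Q := fun d => exists a b w, C1 a /\ C2 b /\ Forall (letter G Sg) w /\
                      gmul a (word_eval G w) = b /\ length w = d).
  destruct (dec_inh_nat_subset_has_unique_least_element Q (fun d => classic (Q d)))
    as [d [[[a [b [w [Ha [Hb [Hw [Hab <-]]]]]]] Hleast] _]].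
  - destruct (Hgen (gmul (ginv a0) b0)) as [w [Hw Ew]].
    exists (length w), a0, b0, w. repeat split; auto. rewrite <- Ew. apply gmulKVg.
  - exists a, b, w. repeat split; auto.
    intros a' b' w' Ha' Hb' Hw' Hab'. apply Hleast. exists a', b', w'. auto.
Qed.

Lemma coset_vertex_nonempty l C :
  is_subgroup G (P l) -> valid_vtx G Lam P (VW G Lam l C) -> exists x, C x.
Proof.
  intros [H1 _] [g ->]. exists g, gone. split; [exact H1|]. symmetry; apply gmulg1.
Qed.

Lemma pair_stabiliser_finite u1 u2 :
  generates G Sg -> (forall l, is_subgroup G (P l)) ->
  graph_fine (valid_vtx G Lam P) (cone_adj G Lam Sg) ->
  valid_vtx G Lam P u1 -> valid_vtx G Lam P u2 -> u1 <> u2 ->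
  finite_set (fun h => act G Lam h u1 = u1 /\ act G Lam h u2 = u2).
Proof.
  intros Hgen Hsub Hfine Hv1 Hv2 Hne.
  destruct u1 as [k|l1 C1].
  { exists [gone]. intros h [E _]. left. symmetry. exact (act_VG_fixed h k E). }
  destruct u2 as [k|l2 C2].
  { exists [gone]. intros h [_ E]. left. symmetry. exact (act_VG_fixed h k E). }
  destruct (coset_vertex_nonempty l1 C1 (Hsub l1) Hv1) as [a0 Ha0].
  destruct (coset_vertex_nonempty l2 C2 (Hsub l2) Hv2) as [b0 Hb0].
  destruct (exists_shortest_word C1 C2 a0 b0 Hgen Ha0 Hb0)
    as [a [b [w [Ha [Hb [Hw [Hab Hmin]]]]]]].
  exact (geo_pair_stabiliser_finite P Sg l1 l2 C1 C2 a b w Ha Hb Hw Hab Hmin Hfine Hv1 Hv2 Hne).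
Qed.

Lemma transporter_finite (u1 u2 v1 v2 : vtx G Lam) :
  finite_set (fun h => act G Lam h u1 = u1 /\ act G Lam h u2 = u2) ->
  finite_set (fun g => act G Lam g u1 = v1 /\ act G Lam g u2 = v2).
Proof.
  intros [L HL].
  destruct (classic (exists g0, act G Lam g0 u1 = v1 /\ act G Lam g0 u2 = v2))
    as [[g0 [E1 E2]]|Hno].
  - exists (map (gmul g0) L). intros g [F1 F2]. apply in_map_iff.
    exists (gmul (ginv g0) g). split; [apply gmulKVg|]. apply HL.
    rewrite !act_mul, F1, F2, <- E1, <- E2, !actK. auto.
  - exists []. intros g Hg. apply Hno. eauto.
Qed.

(* The barycentre is nonzero exactly on the vertices of [sigma]. *)
Lemma barycentre_stabiliser_in (sigma : list (vtx G Lam)) g u :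
  sigma <> [] -> stabiliser G Lam (barycentre G Lam sigma) g ->
  In u sigma -> In (act G Lam g u) sigma.
Proof.
  intros Hne Hg Hu. specialize (Hg (act G Lam g u)).
  unfold act_pt, barycentre in Hg. rewrite actK in Hg.
  destruct (excluded_middle_informative (In u sigma)) as [_|]; [|contradiction].
  destruct (excluded_middle_informative (In (act G Lam g u) sigma)) as [Hin|_]; [exact Hin|].
  exfalso. apply (Rinv_neq_0_compat (INR (length sigma))); [|exact Hg].
  apply not_0_INR. rewrite length_zero_iff_nil. exact Hne.
Qed.

Lemma barycentre_stabiliser_finite (sigma : list (vtx G Lam)) u1 u2 :
  In u1 sigma -> In u2 sigma ->
  finite_set (fun h => act G Lam h u1 = u1 /\ act G Lam h u2 = u2) ->
  finite_set (stabiliser G Lam (barycentre G Lam sigma)).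
Proof.
  intros Hu1 Hu2 Hfin.
  assert (Hne : sigma <> []) by (intros ->; destruct Hu1).
  destruct (finite_set_union (list_prod sigma sigma)
              (fun v g => act G Lam g u1 = fst v /\ act G Lam g u2 = snd v)) as [L HL].
  { intros [v1 v2] _. exact (transporter_finite u1 u2 v1 v2 Hfin). }
  exists L. intros g Hg. apply HL.
  exists (act G Lam g u1, act G Lam g u2). split; [|auto].
  apply in_prod; apply (barycentre_stabiliser_in sigma); assumption.
Qed.

End Stabilisers.

Theorem corollary2p3 (G : Group) (Lam : Type) (P : Lam -> G -> Prop)
  (S : list G) (n : nat) :
  (exists LL : list Lam, forall l, In l LL) ->
  generates G S ->
  rel_hyperbolic G Lam P S ->
  1 <= n ->
  forall sigma : list (vtx G Lam),
    rips_simplex G Lam P S n sigma -> 2 <= length sigma ->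
    finite_set (stabiliser G Lam (barycentre G Lam sigma)).
Proof.
  intros _ Hgen [Hsub [Hfine _]] _ sigma [_ [Hnd [Hval _]]] Hlen.
  destruct sigma as [|u1 [|u2 rest]]; cbn in Hlen; try lia.
  apply (barycentre_stabiliser_finite _ u1 u2); [left; reflexivity|right; left; reflexivity|].
  apply (pair_stabiliser_finite P S); auto.
  - exact (Forall_inv Hval).
  - exact (Forall_inv (Forall_inv_tail Hval)).
  - intros ->. apply NoDup_cons_iff in Hnd. apply (proj1 Hnd). left; reflexivity.
Qed.
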